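(* The transformation $\mathcal{A}_1$ is not an Upsilon transformation: there is no measure $\tau$ on $(0,\infty)$ such that $\mathcal{A}_1(\rho)(B)=\int_0^\infty\rho(u^{-1}B)\tau(\mathrm{d}u)$ for all $\rho\in\mathfrak{M}_L^1(\mathbb{R}^d)$ and all Borel sets $B\subset\mathbb{R}^d$.
   Context: A Lévy measure on $\mathbb{R}^d$ is a measure $\nu$ with $\nu(\{0\})=0$ and $\int(1\wedge|x|^2)\nu(\mathrm{d}x)<\infty$; $\mathfrak{M}_L^1(\mathbb{R}^d)$ is the class of those with $\int(1\wedge|x|)\nu(\mathrm{d}x)<\infty$. $a_1(r;s)=2\pi^{-1}(s-r^2)^{-1/2}$ for $0<r<s^{1/2}$, $0$ otherwise; $\mathcal{A}_1(\nu)(B)=\int_{\mathbb{R}^d\setminus\{0\}}\nu(\mathrm{d}x)\int_0^\infty a_1(r;|x|)1_B(rx/|x|)\mathrm{d}r$. Here $u^{-1}B=\{u^{-1}x:x\in B\}$. *)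

From HB Require Import structures.
From mathcomp Require Import all_boot all_order all_algebra.
From mathcomp Require Import all_classical all_reals all_analysis.
Set Implicit Arguments. Unset Strict Implicit. Unset Printing Implicit Defensive.
Import Order.TTheory GRing.Theory Num.Theory.
Import numFieldNormedType.Exports.
Local Open Scope classical_set_scope.
Local Open Scope ring_scope.

Definition Rd (R : realType) (d : nat) :=
  g_sigma_algebraType (@open 'rV[R]_d).

Definition enorm (R : realType) (d : nat) (x : 'rV[R]_d) : R :=
  Num.sqrt (\sum_(i < d) x ord0 i ^+ 2).

Definition a1 (R : realType) (r s : R) : R :=
  if (0 < r) && (r < Num.sqrt s) then 2 / pi * (Num.sqrt (s - r ^+ 2))^-1
  else 0.

Definition levy_measure (R : realType) (d : nat)
    (nu : {measure set (Rd R d) -> \bar R}) : Prop :=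
  nu [set (0%R : 'rV[R]_d)] = 0%E /\
  (\int[nu]_x (Order.min 1 (enorm (x : 'rV[R]_d) ^+ 2))%:E < +oo)%E.

Definition ML1 (R : realType) (d : nat)
    (nu : {measure set (Rd R d) -> \bar R}) : Prop :=
  levy_measure nu /\
  (\int[nu]_x (Order.min 1 (enorm (x : 'rV[R]_d)))%:E < +oo)%E.

Definition A1 (R : realType) (d : nat)
    (nu : {measure set (Rd R d) -> \bar R}) (B : set (Rd R d)) : \bar R :=
  (\int[nu]_(x in ~` [set (0%R : 'rV[R]_d)])
     \int[lebesgue_measure]_(r in `]0%R, +oo[)
        (a1 r (enorm (x : 'rV[R]_d)) *
         \1_B ((r / enorm (x : 'rV[R]_d)) *: (x : 'rV[R]_d)))%:E)%E.

Definition scale_set (R : realType) (d : nat) (u : R) (B : set (Rd R d))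
  : set (Rd R d) :=
  [set (u^-1 *: (x : 'rV[R]_d)) | x in B].

From HB Require Import structures.
From mathcomp Require Import all_boot all_order all_algebra.
From mathcomp Require Import all_classical all_reals all_analysis.
From mathcomp Require Import lra.
Import Order.TTheory GRing.Theory Num.Theory.
Import numFieldNormedType.Exports.
Local Open Scope classical_set_scope.
Local Open Scope ring_scope.

(* An Upsilon transformation commutes with dilations: for [k > 0] and every
   [u], [delta_(k x)(u^-1 (k B)) = delta_x(u^-1 B)], so it takes the same value
   on [(delta_(e_1), {y_1 > 1/2})] and on [(delta_(4 e_1), {y_1 > 2})].  The
   transformation [A_1] does not: [A_1(delta_x)] is carried by the open segment
   from [0] to [|x|^(-1/2) x], which meets [{y_1 > 1/2}] for [x = e_1] but not
   [{y_1 > 2}] for [x = 4 e_1]. *)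

Import HBNNSimple.

Section nonmeasurable_integrals.
Local Open Scope ereal_scope.
Context (dd : measure_display) (T : measurableType dd) (R : realType).
Implicit Types (D : set T) (f g : T -> \bar R).

Lemma ge0_le_integral_nonmeas (mu : {measure set T -> \bar R}) D f g :
  (forall x, D x -> 0 <= f x) -> (forall x, D x -> f x <= g x) ->
  \int[mu]_(x in D) f x <= \int[mu]_(x in D) g x.
Proof.
move=> f0 fg.
have g0 x : D x -> 0 <= g x by move=> Dx; exact: le_trans (f0 _ Dx) (fg _ Dx).
rewrite !ge0_integralE//=; apply: ereal_sup_le => _ [h hf <-]; exists h => //= x.
apply: le_trans (hf x) _; rewrite /patch; case: ifP => // /set_mem; exact: fg.
Qed.

Lemma ge0_integral_dirac_le (a : T) D f :
  (forall x, D x -> 0 <= f x) -> D a -> \int[\d_a]_(x in D) f x <= f a.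
Proof.
move=> f0 Da; rewrite ge0_integralE//=; apply: ge_ereal_sup => _ [h hf <-].
have := integral_nnsfun (\d_a) measurableT h; rewrite patch_setT => <-.
rewrite integral_dirac//; last exact/measurable_realfun.measurable_EFinP.
by rewrite diracT mul1e; apply: le_trans (hf a) _; rewrite patchT// inE.
Qed.

(* Unlike [integral_dirac], [f] need not be measurable: it is compared with a
   multiple of the indicator of [{a}]. *)
Lemma ge0_integral_dirac (a : T) D f :
  measurable D -> measurable [set a] ->
  (forall x, D x -> 0 <= f x) -> D a -> \int[\d_a]_(x in D) f x = f a.
Proof.
move=> mD ma f0 Da; apply/eqP; rewrite eq_le ge0_integral_dirac_le//=.
pose g x := f a * (\1_[set a] x)%:E.
have ga : \int[\d_a]_(x in D) g x = f a.
  rewrite integral_dirac//; last first.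
    apply: measurable_funeM; apply/measurable_realfun.measurable_EFinP.
    exact: measurable_realfun.measurable_indic.
  by rewrite diracE mem_set// mul1e /g indicE mem_set// mule1.
rewrite -[X in X <= _]ga; apply: ge0_le_integral_nonmeas => x Dx;
  rewrite /g indicE; case: (boolP (x \in _)) => [/set_mem /= xa | _];
  rewrite ?mule1 ?mule0 ?xa//; exact: f0.
Qed.

End nonmeasurable_integrals.

Section first_axis.
Variables (R : realType) (n : nat).
Local Notation V := 'rV[R]_n.+1.
Implicit Types (k s c u : R) (x : Rd R n.+1) (B : set (Rd R n.+1)).

Definition on_axis k : Rd R n.+1 := k *: delta_mx ord0 ord0 : V.

Definition halfspace c : set (Rd R n.+1) := [set y : V | c < y ord0 ord0].

Lemma on_axis00 k : on_axis k ord0 ord0 = k.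
Proof. by rewrite !mxE eqxx mulr1. Qed.

Lemma on_axis_eq0 k : (on_axis k == 0) = (k == 0).
Proof.
apply/eqP/eqP => [k0 | ->]; last by rewrite /on_axis scale0r.
by rewrite -(on_axis00 k) k0 mxE.
Qed.

Lemma scale_on_axis a k : a *: on_axis k = on_axis (a * k).
Proof. by rewrite /on_axis scalerA. Qed.

Lemma enorm_on_axis k : enorm (on_axis k) = `|k|.
Proof.
rewrite /enorm (bigD1 ord0)//= big1 ?addr0 ?on_axis00 ?sqrtr_sqr// => i i0.
by rewrite !mxE (negbTE i0) andbF mulr0 expr2 mulr0.
Qed.

Lemma open_measurable_Rd (A : set (Rd R n.+1)) : open (A : set V) -> measurable A.
Proof. exact: sub_sigma_algebra. Qed.

Lemma measurable_set1_Rd x : measurable [set x].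
Proof.
rewrite -[X in measurable X]setCK; apply: measurableC; apply: open_measurable_Rd.
apply: closed_openC; apply: accessible_closed_set1; apply: hausdorff_accessible.
exact: norm_hausdorff.
Qed.

Lemma measurable_halfspace c : measurable (halfspace c).
Proof.
apply: open_measurable_Rd.
rewrite (_ : halfspace c = (fun y : V => y ord0 ord0) @^-1` [set x | c < x]) //.
by apply: open_comp; [move=> x _; exact: coord_continuous | exact: open_gt].
Qed.

Lemma scale_setE u B x : u != 0 -> scale_set u B x <-> B (u *: x).
Proof.
move=> u0; split => [[y By <-] | Bux]; first by rewrite scalerA divff// scale1r.
by exists (u *: x) => //; rewrite scalerA mulVf// scale1r.
Qed.

Lemma dirac_scale_set_halfspace_dilate k s c u : 0 < k -> 0 < u ->
  \d_(on_axis (k * s)) (scale_set u (halfspace (k * c))) =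
  \d_(on_axis s) (scale_set u (halfspace c)) :> \bar R.
Proof.
move=> k0 u0; have u0' : u != 0 by rewrite gt_eqF.
rewrite !diracE; congr ((_ : bool)%:R%:E); apply/idP/idP => /set_mem;
  move=> /(scale_setE u _ _ u0'); rewrite /halfspace /= !scale_on_axis !on_axis00;
  move=> h; apply/mem_set/(scale_setE u _ _ u0'); rewrite /= scale_on_axis on_axis00.
- by rewrite -(ltr_pM2l k0) mulrCA.
- by rewrite mulrCA ltr_pM2l.
Qed.

Lemma ML1_dirac x : x != 0 -> ML1 (\d_x : {measure set (Rd R n.+1) -> \bar R}).
Proof.
move=> x0; have x_n0 : ~ [set 0 : V] x by move=> /= /eqP; rewrite (negbTE x0).
split; first split.
- by rewrite /= diracE memNset.
- rewrite ge0_integral_dirac ?ltry//; first exact: measurable_set1_Rd.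
  by move=> *; rewrite lee_fin le_min ler01 sqr_ge0.
- rewrite ge0_integral_dirac ?ltry//; first exact: measurable_set1_Rd.
  by move=> *; rewrite lee_fin le_min ler01 sqrtr_ge0.
Qed.

Definition A1_ray B x : \bar R :=
  (\int[lebesgue_measure]_(r in `]0%R, +oo[)
     (a1 r (enorm (x : V)) * \1_B ((r / enorm (x : V)) *: (x : V)))%:E)%E.

Lemma a1_ge0 r s : 0 <= a1 r s.
Proof.
rewrite /a1; case: ifP => // _.
by rewrite mulr_ge0 ?invr_ge0 ?sqrtr_ge0// divr_ge0// pi_ge0.
Qed.

Lemma A1_ray_ge0 B x : (0 <= A1_ray B x)%E.
Proof. by apply: integral_ge0 => r _; rewrite lee_fin mulr_ge0 ?a1_ge0. Qed.

Lemma A1_dirac B x : x != 0 ->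
  A1 (\d_x : {measure set (Rd R n.+1) -> \bar R}) B = A1_ray B x.
Proof.
move=> x0; apply: ge0_integral_dirac => //.
- by apply: measurableC; exact: measurable_set1_Rd.
- exact: measurable_set1_Rd.
- by move=> *; exact: A1_ray_ge0.
- by move=> /= /eqP; rewrite (negbTE x0).
Qed.

Lemma A1_ray_on_axis_halfspace s c : 0 < s ->
  A1_ray (halfspace c) (on_axis s) =
  (\int[lebesgue_measure]_(r in `]0%R, +oo[) (a1 r s * (c < r)%R%:R)%:E)%E.
Proof.
move=> s0; apply: eq_integral => r _.
rewrite enorm_on_axis gtr0_norm// scale_on_axis mulfVK ?gt_eqF// indicE.
rewrite (_ : (_ \in _) = (c < r)) //; apply/idP/idP => [/set_mem|cr];
  [|apply/mem_set]; by rewrite /halfspace /= (on_axis00 (r : R)).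
Qed.

(* [a1 r s] vanishes for [r >= s^(1/2)]. *)
Lemma A1_ray_halfspace_eq0 s c : 0 < s -> Num.sqrt s <= c ->
  A1_ray (halfspace c) (on_axis s) = 0%E.
Proof.
move=> s0 sc; rewrite A1_ray_on_axis_halfspace//.
apply: integral0_eq => r _; rewrite /a1.
case: ifPn => [/andP[_ rs] | _]; last by rewrite mul0r.
by rewrite ltNge (le_trans (ltW rs) sc) mulr0.
Qed.

(* On [(c, 1)] the density [a1 r 1] is at least [2 / pi]. *)
Lemma A1_ray_halfspace_gt0 c : 0 <= c < 1 ->
  (0 < A1_ray (halfspace c) (on_axis 1))%E.
Proof.
move=> /andP[c0 c1]; rewrite A1_ray_on_axis_halfspace//.
have pi2 : 0 < 2 / pi :> R by rewrite divr_gt0// pi_gt0.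
pose I : set R := `]c, 1[%classic.
have mI : measurable I by exact: measurable_itv.
apply: (@lt_le_trans _ _ (\int[lebesgue_measure]_(r in `]0%R, +oo[)
                            ((2 / pi)%:E * (\1_I r)%:E))%E).
  rewrite ge0_integralZl_EFin ?ltW//; last first.
    exact/measurable_realfun.measurable_EFinP/measurable_realfun.measurable_indic.
  rewrite integral_indic//= setIidl; last first.
    move=> x; rewrite /I /= !in_itv /= andbT => /andP[cx _]; exact: le_lt_trans cx.
  by rewrite /I lebesgue_measure_itv /= lte_fin c1 -EFinD -EFinM lte_fin mulr_gt0// subr_gt0.
apply: ge0_le_integral_nonmeas => [x _ | r].
  by rewrite -EFinM lee_fin indicE mulr_ge0 ?ler0n ?ltW.
rewrite /= in_itv /= andbT => r0; rewrite -EFinM lee_fin indicE.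
case: (boolP (r \in I)) => [|_]; last by rewrite mulr0 mulr_ge0 ?a1_ge0.
rewrite /I inE /= in_itv /= => /andP[cr r1].
rewrite cr /a1 r0 sqrtr1 r1 /= !mulr1 ler_pMr// invf_ge1 ?sqrtr_gt0 ?subr_gt0;
  last by nra.
by rewrite -[leRHS]sqrtr1 ler_sqrt// lerBlDr lerDl sqr_ge0.
Qed.

End first_axis.

Arguments on_axis {R} n.
Arguments halfspace {R} n.
Arguments A1_ray {R n}.

Theorem theorem3p10 (R : realType) (d : nat) (hd : (0 < d)%N) :
  ~ exists tau : {measure set R -> \bar R},
      forall rho : {measure set (Rd R d) -> \bar R}, ML1 rho ->
      forall B : set (Rd R d), measurable B ->
        A1 rho B = (\int[tau]_(u in `]0%R, +oo[) rho (scale_set u B))%E.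
Proof.
case: d hd => [//|n] _ [tau Htau].
have upsilon (s c : R) : s != 0 ->
    A1_ray (halfspace n c) (on_axis n s) =
    (\int[tau]_(u in `]0%R, +oo[) \d_(on_axis n s) (scale_set u (halfspace n c)))%E.
  move=> s0; rewrite -A1_dirac ?on_axis_eq0//.
  by apply: Htau; [apply: ML1_dirac; rewrite on_axis_eq0 | exact: measurable_halfspace].
have dilate (k s c : R) : 0 < k -> s != 0 ->
    A1_ray (halfspace n (k * c)) (on_axis n (k * s)) = A1_ray (halfspace n c) (on_axis n s).
  move=> k0 s0; have ks0 : k * s != 0 by rewrite mulf_neq0 // gt_eqF.
  rewrite !upsilon//; apply: eq_integral => u.
  by rewrite inE /= in_itv /= andbT => u0; rewrite dirac_scale_set_halfspace_dilate.
have half4 : 4 * 2^-1 = 2 :> R by lra.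
have sqrt4 : Num.sqrt 4 = 2 :> R.
  by rewrite (_ : 4 = 2 ^+ 2) ?sqrtr_sqr ?ger0_norm// expr2 -natrM.
have half_range : 0 <= (2^-1 : R) < 1 by apply/andP; split; lra.
have := @A1_ray_halfspace_gt0 R n _ half_range.
rewrite -(dilate 4) ?oner_neq0// mulr1 half4.
by rewrite A1_ray_halfspace_eq0 ?ltxx// sqrt4.
Qed.
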